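(* Let $G$ be a finite simple graph without isolated vertices. Then Dom has a winning strategy in the Bicolored Domination Game on $G$, both when Dom makes the first move and when Sepy makes the first move.
   Context: For a vertex $v$ of a graph $G$, $N[v]$ denotes its closed neighborhood. The Bicolored Domination Game on an isolate-free graph $G$ is played by two players, Dom and Sepy, who alternately color vertices; Dom may only use the color $p$ (purple) and Sepy may only use the color $b$ (blue). At any stage $V_p$ and $V_b$ denote the sets of vertices colored $p$ and $b$. A player whose color is $c$ makes a move by choosing a vertex $v$ such that (i) $v$ is not yet colored, and (ii) there exists $u\in N[v]$ with $N[u]\cap V_c=\emptyset$ (evaluated before the move); then $v$ receives color $c$. The game terminates as soon as one of the following holds: (s* ) some vertex $v$ has $N[v]\subseteq V_p$ or $N[v]\subseteq V_b$ — then Sepy wins; (d** ) for some color $c\in\{p,b\}$, $V_c$ dominates all vertices of $G$ and no vertex $v$ satisfies $N[v]\subseteq V_c$ — then Dom wins. *)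

From mathcomp Require Import all_boot.
Set Implicit Arguments.
Unset Strict Implicit.
Unset Printing Implicit Defensive.

(* A finite simple graph: vertex set T (a finType), adjacency e : rel T
   (symmetry / irreflexivity are hypotheses of the theorem).
   Colors: true = p (purple, Dom), false = b (blue, Sepy). *)

Section BicoloredGame.
Variables (T : finType) (e : rel T).

Definition cnbhd (v : T) : {set T} := [set u | (u == v) || e v u].

Definition colset (c : bool) (Vp Vb : {set T}) : {set T} :=
  if c then Vp else Vb.

Definition dominates (V : {set T}) : bool :=
  [forall u, cnbhd u :&: V != set0].

Definition sepy_cond (Vp Vb : {set T}) : bool :=
  [exists v, (cnbhd v \subset Vp) || (cnbhd v \subset Vb)].

Definition dom_cond_col (V : {set T}) : bool :=
  dominates V && [forall v, ~~ (cnbhd v \subset V)].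

Definition dom_cond (Vp Vb : {set T}) : bool :=
  dom_cond_col Vp || dom_cond_col Vb.

Definition terminal (Vp Vb : {set T}) : bool :=
  sepy_cond Vp Vb || dom_cond Vp Vb.

Definition dom_won (Vp Vb : {set T}) : bool :=
  ~~ sepy_cond Vp Vb && dom_cond Vp Vb.

Definition legal (c : bool) (Vp Vb : {set T}) (v : T) : bool :=
  [&& v \notin Vp, v \notin Vb &
      [exists u in cnbhd v, cnbhd u :&: colset c Vp Vb == set0]].

(* DomWins t Vp Vb : from position (Vp, Vb) with Dom to move iff t = true,
   Dom has a winning strategy.  Since every move colors a new vertex,
   the game is finite and this inductive predicate expresses exactly the
   existence of a winning strategy for Dom. *)
Inductive DomWins : bool -> {set T} -> {set T} -> Prop :=
| DW_end t Vp Vb :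
    dom_won Vp Vb -> DomWins t Vp Vb
| DW_dom Vp Vb v :
    ~~ terminal Vp Vb -> legal true Vp Vb v ->
    DomWins false (v |: Vp) Vb -> DomWins true Vp Vb
| DW_sepy Vp Vb :
    ~~ terminal Vp Vb ->
    (exists v, legal false Vp Vb v) ->
    (forall v, legal false Vp Vb v -> DomWins true Vp (v |: Vb)) ->
    DomWins false Vp Vb.

End BicoloredGame.

From mathcomp Require Import all_boot.
Set Implicit Arguments.
Unset Strict Implicit.
Unset Printing Implicit Defensive.

(* Dom fixes a maximum matching and keeps the position safe: the two colour
   classes are disjoint, every blue vertex has a purple neighbour, and every
   purple vertex has a blue neighbour or an uncoloured reserve neighbour, which
   Dom never colours himself.  A reserve of p is an unmatched vertex, or the
   partner of p provided p sees every uncoloured unmatched vertex the partner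
   sees.  In a safe position no closed neighbourhood is monochromatic, and
   since no augmenting path of length one or three exists, Dom can always move
   (first, or in reply to Sepy) so that the position stays safe.  As every move
   colours a new vertex, the game ends, and it can only end in a win for Dom. *)

Section Positions.
Variables (T : finType) (e : rel T).
Hypothesis e_sym : symmetric e.
Local Notation N := (cnbhd e).
Implicit Types (P B : {set T}).

Lemma in_cnbhd u v : (u \in N v) = (u == v) || e v u.
Proof. by rewrite inE. Qed.

Lemma cnbhd_refl v : v \in N v.
Proof. by rewrite in_cnbhd eqxx. Qed.

Lemma cnbhd_adj v u : e v u -> u \in N v.
Proof. by rewrite in_cnbhd => ->; rewrite orbT. Qed.

Lemma cnbhd_sym u v : (u \in N v) = (v \in N u).
Proof. by rewrite !in_cnbhd eq_sym e_sym. Qed.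

Definition undominated P u := N u :&: P == set0.

Lemma undominatedP P u : reflect (forall v, v \in N u -> v \notin P) (undominated P u).
Proof.
apply: (iffP eqP) => [/setP H v Hv | H].
  by move: (H v); rewrite in_setI Hv in_set0 /= => ->.
by apply/setP => v; rewrite in_setI in_set0; case Hv: (v \in N u) => /=; rewrite ?(negbTE (H v Hv)).
Qed.

Lemma undominatedI P u :
  u \notin P -> (forall p, p \in P -> ~~ e u p) -> undominated P u.
Proof.
move=> uP nadj; apply/undominatedP => v; rewrite in_cnbhd => /orP [/eqP -> // | euv].
exact: contraL (nadj v) euv.
Qed.

Lemma undominated_notin P u : undominated P u -> u \notin P.
Proof. by move/undominatedP; apply; apply: cnbhd_refl. Qed.

Lemma undominated_nadj P u p : undominated P u -> p \in P -> e u p = false.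
Proof. by move/undominatedP => H Hp; apply: contraTF Hp => /cnbhd_adj/H. Qed.

Lemma legalP c P B v :
  reflect [/\ v \notin P, v \notin B & exists2 u, u \in N v & undominated (colset c P B) u]
          (legal e c P B v).
Proof.
apply: (iffP and3P) => [[vP vB /exists_inP [u Hu Hund]] | [vP vB [u Hu Hund]]].
  by split => //; exists u.
by split => //; apply/exists_inP; exists u.
Qed.

Lemma no_sepy_condI P B :
  {in P, forall v, exists2 y, y \in N v & y \notin P} ->
  {in B, forall v, exists2 y, y \in N v & y \notin B} ->
  ~~ sepy_cond e P B.
Proof.
move=> escP escB; apply/existsP => -[v /orP [] sub].
  by have [y Hy] := escP v (subsetP sub v (cnbhd_refl v)); rewrite (subsetP sub y Hy).
by have [y Hy] := escB v (subsetP sub v (cnbhd_refl v)); rewrite (subsetP sub y Hy).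
Qed.

Lemma dom_won_terminal P B : ~~ sepy_cond e P B -> terminal e P B -> dom_won e P B.
Proof. by rewrite /terminal /dom_won => /negbTE-> /= ->. Qed.

Lemma nonterminal_undominated c P B :
  ~~ terminal e P B -> exists u, undominated (colset c P B) u.
Proof.
rewrite /terminal negb_or => /andP [nsepy ndom].
have ndomc : ~~ dom_cond_col e (colset c P B).
  by move: ndom; rewrite /dom_cond negb_or; case: c => /andP [].
move: ndomc; rewrite /dom_cond_col negb_and negb_forall => /orP [|/existsP [v]].
  by rewrite negb_forall => /existsP [u]; rewrite negbK => Hu; exists u.
rewrite negbK => sub; case/negP: nsepy; apply/existsP; exists v.
by case: c sub => ->; rewrite ?orbT.
Qed.

Lemma sepy_move_exists P B : ~~ terminal e P B -> exists w, legal e false P B w.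
Proof.
move=> nt; have [u Hu] := nonterminal_undominated false nt.
have nsepy : ~~ sepy_cond e P B by move: nt; rewrite /terminal negb_or => /andP [].
move/existsPn: nsepy => /(_ u); rewrite negb_or => /andP [/subsetPn [v Hv vP] _].
exists v; apply/legalP; split => //; first exact: (undominatedP _ _ Hu).
by exists u; rewrite // cnbhd_sym.
Qed.

Lemma uncolored_card_ltn P B x w : w \notin P :|: B ->
  #|~: ((x |: P) :|: (w |: B))| < #|~: (P :|: B)|.
Proof.
move=> wPB; apply: proper_card; apply/properP; split.
  by apply/subsetP => y; rewrite !inE !negb_or => /andP [/andP [_ ->] /andP [_ ->]].
by exists w; rewrite !inE ?eqxx ?orbT //; rewrite inE in wPB.
Qed.

Section InvariantStrategy.
Variable Inv : {set T} -> {set T} -> Prop.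
Hypothesis Inv_no_sepy : forall P B, Inv P B -> ~~ sepy_cond e P B.
Hypothesis Inv_no_sepy_after : forall P B w,
  Inv P B -> legal e false P B w -> ~~ sepy_cond e P (w |: B).
Hypothesis Inv_reply : forall P B w,
  Inv P B -> legal e false P B w -> ~~ terminal e P (w |: B) ->
  exists x, legal e true P (w |: B) x /\ Inv (x |: P) (w |: B).

Lemma DomWins_sepy_to_move P B : Inv P B -> DomWins e false P B.
Proof.
elim: {P B}_.+1 {-2}P {-2}B (ltnSn #|~: (P :|: B)|) => // n IHn P B ltn InvPB.
have [won|notwon] := boolP (dom_won e P B); first exact: DW_end.
have nt : ~~ terminal e P B by apply: contra notwon; apply: dom_won_terminal; auto.
apply: DW_sepy nt (sepy_move_exists nt) _ => w legw.
have [won'|notwon'] := boolP (dom_won e P (w |: B)); first exact: DW_end.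
have nt' : ~~ terminal e P (w |: B).
  by apply: contra notwon'; apply: dom_won_terminal; apply: Inv_no_sepy_after.
have [x [legx Invx]] := Inv_reply InvPB legw nt'.
apply: DW_dom nt' legx (IHn _ _ _ Invx); rewrite -ltnS; apply: leq_trans ltn; rewrite ltnS.
by case/legalP: legw => wP wB _; apply: uncolored_card_ltn; rewrite inE negb_or wP.
Qed.

Hypothesis Inv_open : forall P B u,
  Inv P B -> undominated P u -> exists x, legal e true P B x /\ Inv (x |: P) B.

Lemma DomWins_dom_to_move P B : Inv P B -> DomWins e true P B.
Proof.
move=> InvPB; have [won|notwon] := boolP (dom_won e P B); first exact: DW_end.
have nt : ~~ terminal e P B by apply: contra notwon; apply: dom_won_terminal; auto.
have [u Hu] := nonterminal_undominated true nt.
have [x [legx Invx]] := Inv_open InvPB Hu.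
exact: DW_dom nt legx (DomWins_sepy_to_move Invx).
Qed.

End InvariantStrategy.
End Positions.

Section MaximumMatching.
Variables (T : finType) (e : rel T).
Hypotheses (e_sym : symmetric e) (e_irr : irreflexive e).

(* A matching is an involution mapping each vertex to its partner and fixing
   the unmatched vertices. *)
Definition matching (f : {ffun T -> T}) :=
  [forall x, f (f x) == x] && [forall x, (f x != x) ==> e x (f x)].

Definition matched (f : {ffun T -> T}) := [set x | f x != x].

Definition mate := [arg max_(f > [ffun x => x] | matching f) #|matched f|].

Lemma mate_spec : matching mate /\ forall g, matching g -> #|matched g| <= #|matched mate|.
Proof.
rewrite /mate; case: arg_maxnP => [|f Hf Hmax]; last by split => // g /Hmax.
by apply/andP; split; apply/forallP => x; rewrite !ffunE ?eqxx.
Qed.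

Lemma mateK : involutive mate.
Proof. by case: mate_spec => /andP [/forallP H _] _ x; apply/eqP. Qed.

Lemma mate_adj x : mate x != x -> e x (mate x).
Proof. by case: mate_spec => /andP [_ /forallP H] _; apply/implyP. Qed.

Lemma mate_inj : injective mate.
Proof. exact: can_inj mateK. Qed.

(* Otherwise replacing mate by h on S would give a larger matching. *)
Lemma mate_saturates (S : {set T}) (h : T -> T) :
  (forall v, v \in S -> [/\ h v \in S, h (h v) = v & e v (h v)]) ->
  (forall v, v \in S -> mate v \in S) ->
  forall v, v \in S -> mate v != v.
Proof.
move=> hS mateS v0 v0S; apply/negP => /eqP mate_v0.
have mate_out v : v \notin S -> mate v \notin S.
  by apply: contra => /mateS; rewrite mateK.
have h_moves v : v \in S -> h v != v.
  by case/hS => _ _; apply: contraTneq => ->; rewrite e_irr.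
pose g := [ffun v => if v \in S then h v else mate v].
have g_matching : matching g.
  apply/andP; split; apply/forallP => v; rewrite !ffunE;
    case: (boolP (v \in S)) => [/hS [hvS hhv ehv] | vS].
  - by rewrite hvS hhv.
  - by rewrite (negbTE (mate_out v vS)) mateK.
  - by rewrite ehv implybT.
  - by apply/implyP; apply: mate_adj.
have lt_matched : matched mate \proper matched g.
  apply/properP; split.
    by apply/subsetP => v; rewrite !inE ffunE; case: ifP => // /h_moves.
  by exists v0; rewrite !inE ?ffunE ?v0S ?mate_v0 ?eqxx ?h_moves.
have [_ /(_ g g_matching)] := mate_spec.
by rewrite leqNgt (proper_card lt_matched).
Qed.

Lemma unmatched_nadj a b : mate a = a -> mate b = b -> e a b = false.
Proof.
move=> ma mb; apply/negP => eab.
have ab : a != b by apply: contraTneq eab => ->; rewrite e_irr.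
pose h v := if v == a then b else a.
have ba : (b == a) = false by rewrite eq_sym (negbTE ab).
suff : mate a != a by rewrite ma eqxx.
apply: (@mate_saturates [set a; b] h) (set21 a b).
  by move=> v /set2P [->|->]; rewrite /h ?(eqxx, ba) ?set21 ?set22; split; rewrite // e_sym.
by move=> v /set2P [->|->]; rewrite ?ma ?mb ?set21 ?set22.
Qed.

Lemma no_augmenting_path3 z a z' :
  mate z = z -> mate z' = z' -> e z a -> e (mate a) z' -> z = z'.
Proof.
move=> mz mz' eza ebz'; have [// | zz'] := eqVneq z z'.
have [ma | ma] := eqVneq (mate a) a; first by rewrite unmatched_nadj in eza.
set b := mate a in ma ebz'.
have mb : mate b = a by rewrite mateK.
have mb' : mate b != b by rewrite mb eq_sym.
have unmatched_neq x y : mate x = x -> mate y != y -> (y == x) = false.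
  by move=> mx; apply: contraNF => /eqP ->; rewrite mx.
have az := unmatched_neq _ _ mz ma; have bz := unmatched_neq _ _ mz mb'.
have z'a : (z' == a) = false by rewrite eq_sym unmatched_neq.
have z'b : (z' == b) = false by rewrite eq_sym unmatched_neq.
have ba : (b == a) = false := negbTE ma.
have z'z : (z' == z) = false by apply/negbTE; rewrite eq_sym.
pose h v := if v == z then a else if v == a then z else if v == b then z' else b.
suff : mate z != z by rewrite mz eqxx.
apply: (@mate_saturates [set z; a; b; z'] h); last by rewrite !inE eqxx.
  move=> v; rewrite !inE -!orbA => /or4P [] /eqP ->;
    by rewrite /h ?(eqxx, az, bz, ba, z'z, z'a, z'b, orbT); split => //; rewrite e_sym.
by move=> v; rewrite !inE -!orbA => /or4P [] /eqP ->; rewrite ?mz ?mz' ?mb /b ?eqxx ?orbT.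
Qed.

Lemma mate_orient a :
  (forall z, mate z = z -> e (mate a) z -> e a z) \/
  (forall z, mate z = z -> e a z -> e (mate a) z).
Proof.
have [H | /existsP [z1]] := boolP [forall z, (mate z == z) ==> e (mate a) z ==> e a z].
  by left => z mz ebz; move/forallP/(_ z): H; rewrite mz eqxx ebz.
rewrite !negb_imply => /and3P [/eqP mz1 ebz1 /negP naz1].
right => z mz eaz; have eza : e z a by rewrite e_sym.
by move: eaz; rewrite (no_augmenting_path3 mz mz1 eza ebz1) => /naz1.
Qed.

End MaximumMatching.

Section Strategy.
Variables (T : finType) (e : rel T).
Hypotheses (e_sym : symmetric e) (e_irr : irreflexive e)
  (no_isolated : forall v : T, exists u : T, e v u).
Local Notation N := (cnbhd e).
Local Notation mate := (mate e).
Local Notation undominated := (undominated e).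
Implicit Types (P B : {set T}).

Definition has_nbr_in (A : {set T}) v := exists2 a, a \in A & e v a.

Definition reserve P p q :=
  mate q = q \/ (mate p = q /\ forall z, mate z = z -> z \notin P -> e q z -> e p z).

Definition guarded P B p :=
  has_nbr_in B p \/ exists q, [/\ e p q, q \notin P, q \notin B & reserve P p q].

Definition safe P B :=
  [/\ forall x, x \in P -> x \notin B,
      forall b, b \in B -> has_nbr_in P b,
      forall p, p \in P -> guarded P B p &
      forall a, a \in B -> mate a != a -> mate a \notin P -> mate a \notin B ->
        has_nbr_in P (mate a)].

Lemma has_nbr_in_sub (A A' : {set T}) v : A \subset A' -> has_nbr_in A v -> has_nbr_in A' v.
Proof. by move=> sAA' [a Ha eva]; exists a => //; apply: (subsetP sAA'). Qed.

Lemma reserve_sub P P' p q : P \subset P' -> reserve P p q -> reserve P' p q.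
Proof.
move=> sPP' [mq | [mp Hz]]; [by left | right; split => // z mz zP'].
by apply: Hz => //; apply: contra zP'; apply: (subsetP sPP').
Qed.

Lemma not_reserve_mate P p v : p \in P -> v \notin P -> mate v != v -> ~ reserve P p (mate v).
Proof.
move=> pP vP mv [| [/mate_inj pv _]]; first by rewrite mateK => mmv; rewrite -mmv eqxx in mv.
by rewrite -pv pP in vP.
Qed.

Lemma reserve_unmatched_nbr P p y u : p \in P -> undominated P u -> mate u = u -> e u y ->
  ~ reserve P p y.
Proof.
move=> pP undu mu euy [my | [_ Hz]]; first by rewrite unmatched_nadj in euy.
have epu : e p u by apply: Hz; rewrite ?(undominated_notin undu) // e_sym.
by rewrite e_sym (undominated_nadj undu pP) in epu.
Qed.

Lemma guarded_sub P P' B B' p :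
  P \subset P' -> B \subset B' ->
  (forall q, q \in P' -> q \notin P -> e p q -> ~ reserve P p q) ->
  guarded P B p -> guarded P' B' p.
Proof.
move=> sPP' sBB' no_res [pB | [q [epq qP qB res]]].
  by left; apply: has_nbr_in_sub pB.
have [qB' | qB'] := boolP (q \in B'); first by left; exists q.
have [qP' | qP'] := boolP (q \in P'); first by case: (no_res q qP' qP epq).
by right; exists q; split => //; apply: reserve_sub res.
Qed.

Lemma safe_purple_escape P B p : safe P B -> p \in P -> exists2 y, y \in N p & y \notin P.
Proof.
case=> disPB _ guardedP _ /guardedP [[b bB epb] | [q [epq qP _ _]]].
  by exists b; [apply: cnbhd_adj | apply: contraL bB; apply: disPB].
by exists q => //; apply: cnbhd_adj.
Qed.

Lemma safe_no_sepy P B : safe P B -> ~~ sepy_cond e P B.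
Proof.
move=> safePB; apply: no_sepy_condI => [p | b bB]; first exact: safe_purple_escape safePB.
case: safePB => disPB blueB _ _; have [p pP ebp] := blueB b bB.
by exists p; [apply: cnbhd_adj | apply: disPB].
Qed.

Lemma sepy_escape P B w : legal e false P B w -> exists2 y, y \in N w & y \notin w |: B.
Proof.
case/legalP => _ wB [u uw undu]; have [euw | nuw] := eqVneq u w.
  have [y ewy] := no_isolated w; exists y; first exact: cnbhd_adj.
  rewrite in_setU1 negb_or (undominatedP _ _ _ undu) ?euw ?cnbhd_adj // andbT.
  by apply: contraTneq ewy => ->; rewrite e_irr.
by exists u; rewrite // in_setU1 negb_or nuw (undominated_notin undu).
Qed.

Lemma safe_no_sepy_after P B w : safe P B -> legal e false P B w -> ~~ sepy_cond e P (w |: B).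
Proof.
move=> safePB legw; apply: no_sepy_condI => [p | b]; first exact: safe_purple_escape safePB.
case/setU1P => [-> | bB]; first exact: sepy_escape legw.
case: safePB => disPB blueB _ _; have [p pP ebp] := blueB b bB.
exists p; first exact: cnbhd_adj.
case/legalP: legw => wP _ _; rewrite in_setU1 negb_or disPB // andbT.
by apply: contraNneq wP => <-.
Qed.

Lemma safe_extend P B B' x :
  safe P B -> B \subset B' -> x \notin B' ->
  (forall w, w \in B' -> w \notin B -> [/\ w \notin P, has_nbr_in (x |: P) w &
     (mate w != w -> mate w \notin x |: P -> mate w \notin B' -> has_nbr_in (x |: P) (mate w))]) ->
  guarded (x |: P) B' x -> (forall p, p \in P -> e p x -> ~ reserve P p x) ->
  safe (x |: P) B'.
Proof.
case=> disPB blueB guardedP mateB sBB' xB' newB guardx no_res.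
have sPxP := subsetU1 x P.
split.
- move=> y /setU1P [-> // | yP]; apply/negP => yB'.
  have [yB | nyB] := boolP (y \in B); first by move: (disPB y yP); rewrite yB.
  by case: (newB y yB' nyB); rewrite yP.
- move=> b bB'; have [bB | /(newB b bB') [] //] := boolP (b \in B).
  exact: has_nbr_in_sub (blueB b bB).
- move=> p /setU1P [-> // | pP]; apply: guarded_sub (guardedP p pP) => //.
  by move=> q /setU1P [-> _ | qP /negP //]; apply: no_res.
- move=> a aB' ma maxP maB'.
  have [aB | naB] := boolP (a \in B); last by case: (newB a aB' naB) => _ _; apply.
  move: maxP; rewrite in_setU1 negb_or => /andP [_ maP].
  apply: has_nbr_in_sub (mateB a aB ma maP _) => //.
  by apply: contraNN maB'; apply: (subsetP sBB').
Qed.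

Lemma safe_dom_move P B x u :
  safe P B -> undominated P u -> u \in N x -> x \notin B ->
  guarded (x |: P) B x -> (forall p, p \in P -> e p x -> ~ reserve P p x) ->
  legal e true P B x /\ safe (x |: P) B.
Proof.
move=> safePB undu ux xB guardx no_res; split.
  apply/legalP; split => //; last by exists u.
  by apply: (undominatedP _ _ _ undu); rewrite cnbhd_sym.
by apply: (safe_extend safePB (subxx B)) no_res => // w ->.
Qed.

Lemma safe_open P B u : safe P B -> undominated P u ->
  exists x, legal e true P B x /\ safe (x |: P) B.
Proof.
move=> safePB undu; have uP := undominated_notin undu.
have no_pnbr p : p \in P -> e p u -> ~ reserve P p u.
  by move=> pP; rewrite e_sym (undominated_nadj undu pP).
have uB : u \notin B.
  case: safePB => _ blueB _ _; apply/negP => /blueB [p pP eup].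
  by rewrite (undominated_nadj undu pP) in eup.
have [/exists_inP [b bB eub] | no_bnbr] := boolP [exists b in B, e u b].
  exists u; apply: (safe_dom_move safePB undu (cnbhd_refl e u) uB _ no_pnbr) => //.
  by left; exists b.
have uncolored y : e u y -> y \notin P /\ y \notin B.
  move=> euy; split; first by apply/negP => yP; rewrite (undominated_nadj undu yP) in euy.
  by apply: contra no_bnbr => yB; apply/exists_inP; exists y.
have nbr_fresh y : e u y -> u \notin y |: P.
  by move=> euy; rewrite in_setU1 negb_or uP andbT; apply: contraTneq euy => ->; rewrite e_irr.
have [mu | mu] := eqVneq (mate u) u.
  have [y euy] := no_isolated u; have [yP yB] := uncolored y euy.
  exists y; apply: (safe_dom_move safePB undu _ yB); first by apply: cnbhd_adj; rewrite e_sym.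
    by right; exists u; split; rewrite ?nbr_fresh //; [rewrite e_sym | left].
  by move=> p pP _; apply: reserve_unmatched_nbr pP undu mu euy.
have eum := mate_adj mu; have [muP muB] := uncolored _ eum.
case: (mate_orient e_sym e_irr u) => orient.
  exists u; apply: (safe_dom_move safePB undu (cnbhd_refl e u) uB _ no_pnbr) => //.
  right; exists (mate u); split => //; first by rewrite in_setU1 negb_or muP andbT.
  by right; split => // z mz _; apply: orient.
exists (mate u); apply: (safe_dom_move safePB undu (cnbhd_adj _) muB); rewrite 1?e_sym //.
  right; exists u; split; rewrite ?nbr_fresh //; first by rewrite e_sym.
  by right; rewrite mateK; split => // z mz _; apply: orient.
by move=> p pP _; apply: not_reserve_mate.
Qed.

Lemma safe_reply_move P B w x u :
  safe P B -> legal e false P B w -> undominated P u -> u \in N x -> x \notin B -> e x w ->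
  mate w = w \/ mate w = x -> (forall p, p \in P -> e p x -> ~ reserve P p x) ->
  legal e true P (w |: B) x /\ safe (x |: P) (w |: B).
Proof.
move=> safePB legw undu ux xB exw mw no_res; case/legalP: (legw) => wP wB _.
have xwB : x \notin w |: B.
  by rewrite in_setU1 negb_or xB andbT; apply: contraTneq exw => ->; rewrite e_irr.
split.
  apply/legalP; split => //; last by exists u.
  by apply: (undominatedP _ _ _ undu); rewrite cnbhd_sym.
apply: (safe_extend safePB (subsetU1 w B) xwB) no_res; last by left; exists w; rewrite ?setU11.
move=> v /setU1P [-> _ | /[swap] /negP //]; split => //.
  by exists x; rewrite ?setU11 // e_sym.
by case: mw => -> //; rewrite ?eqxx // setU11.
Qed.

Lemma safe_blue_move P B w :
  safe P B -> legal e false P B w -> has_nbr_in P w ->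
  (mate w != w -> mate w \notin P -> mate w \notin B -> has_nbr_in P (mate w)) ->
  safe P (w |: B).
Proof.
case=> disPB blueB guardedP mateB /legalP [wP _ _] wdom mwdom; split.
- move=> y yP; rewrite in_setU1 negb_or disPB // andbT.
  by apply: contraNneq wP => <-.
- by move=> b /setU1P [-> | /blueB].
- move=> p pP; apply: guarded_sub (guardedP p pP) => //; first exact: subsetU1.
  by move=> q ->.
- move=> a /setU1P [-> | aB] ma maP; rewrite in_setU1 negb_or => /andP [_ maB].
    exact: mwdom.
  exact: mateB.
Qed.

Lemma safe_reply_dominated P B w p :
  safe P B -> legal e false P B w -> ~~ terminal e P (w |: B) -> p \in P -> e w p ->
  exists x, legal e true P (w |: B) x /\ safe (x |: P) (w |: B).
Proof.
move=> safePB legw nt pP ewp.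
have [/and4P [mw mwP mwB /exists_inPn mwund] | mw_ok] := boolP
  [&& mate w != w, mate w \notin P, mate w \notin B & ~~ [exists q in P, e (mate w) q]].
  exists (mate w); apply: (safe_reply_move safePB legw _ (cnbhd_refl e _) mwB).
  - exact: undominatedI.
  - by rewrite e_sym mate_adj.
  - by right.
  - by case/legalP: legw => wP _ _ q qP _; apply: not_reserve_mate.
have [u undu] := nonterminal_undominated true nt.
apply: safe_open undu; apply: safe_blue_move legw _ _ => //; first by exists p.
by move=> mw mwP mwB; apply/exists_inP; move: mw_ok; rewrite mw mwP mwB negbK.
Qed.

Lemma safe_reply_undominated P B w :
  safe P B -> legal e false P B w -> undominated P w ->
  exists x, legal e true P (w |: B) x /\ safe (x |: P) (w |: B).
Proof.
move=> safePB legw undw; case/legalP: (legw) => wP wB _.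
have [mw | mw] := eqVneq (mate w) w.
  have [y yw ywB] := sepy_escape legw.
  move: ywB; rewrite in_setU1 negb_or => /andP [ny yB].
  have ewy : e w y by move: yw; rewrite in_cnbhd (negbTE ny).
  exists y; apply: (safe_reply_move safePB legw undw _ yB).
  - by apply: cnbhd_adj; rewrite e_sym.
  - by rewrite e_sym.
  - by left.
  - by move=> p pP _; apply: reserve_unmatched_nbr pP undw mw ewy.
have mwB : mate w \notin B.
  case: safePB => _ _ _ mateB; apply/negP => /mateB; rewrite mateK eq_sym => /(_ mw wP wB).
  by case=> p pP ewp; rewrite (undominated_nadj undw pP) in ewp.
exists (mate w); apply: (safe_reply_move safePB legw undw _ mwB).
- by apply: cnbhd_adj; rewrite e_sym mate_adj.
- by rewrite e_sym mate_adj.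
- by right.
- by move=> p pP _; apply: not_reserve_mate.
Qed.

Lemma safe_reply P B w :
  safe P B -> legal e false P B w -> ~~ terminal e P (w |: B) ->
  exists x, legal e true P (w |: B) x /\ safe (x |: P) (w |: B).
Proof.
move=> safePB legw nt; case/legalP: (legw) => wP _ _.
have [/exists_inP [p pP ewp] | /exists_inPn wund] := boolP [exists p in P, e w p].
  exact: safe_reply_dominated ewp.
exact: safe_reply_undominated (undominatedI wP wund).
Qed.

End Strategy.

Theorem theorem12 (T : finType) (e : rel T)
  (e_sym : symmetric e) (e_irr : irreflexive e)
  (no_isolated : forall v : T, exists u : T, e v u) :
  DomWins e true set0 set0 /\ DomWins e false set0 set0.
Proof.
have safe0 : safe e set0 set0 by split=> x; rewrite inE.
have no_sepy := @safe_no_sepy T e.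
have no_sepy_after := safe_no_sepy_after e_irr no_isolated.
have reply := safe_reply e_sym e_irr no_isolated.
have open_move := safe_open e_sym e_irr no_isolated.
split.
  exact: (DomWins_dom_to_move e_sym no_sepy no_sepy_after reply open_move safe0).
exact: (DomWins_sepy_to_move e_sym no_sepy no_sepy_after reply safe0).
Qed.
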